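(* Let $T\ge1$ and $0<\eta\le\frac{1}{5\sqrt T}$, suppose $d:=\max\{25\eta^2T^2,1\}$ is a positive integer, let $f(w)=\max\{0,\max_{i\in[d]}(\frac{1}{\sqrt d}-w[i]-\frac{\eta i}{4d})\}$, let $\delta=\frac{\eta}{16d}$, and let $\tilde f(w)=\mathbb E_{v}[f(w+\delta v)]$ with $v$ uniform on the closed unit ball of $\mathbb R^d$. Let $(w_t)$ and $(\tilde w_t)$ be the iterates of unprojected GD with step size $\eta$ started at $w_1=\tilde w_1=0$ on $f$ and on $\tilde f$ respectively. Then $w_t=\tilde w_t$ for all $t\in[T]$.
   Context: $w[i]$ denotes the $i$-th coordinate of $w$. *)

From HB Require Import structures.
From mathcomp Require Import all_boot all_order all_algebra.
From mathcomp Require Import all_classical all_reals all_analysis.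
Unset Printing Implicit Defensive.
Import Order.TTheory GRing.Theory Num.Theory.
Import numFieldNormedType.Exports.
Local Open Scope classical_set_scope.
Local Open Scope ring_scope.

Section Defs.
Variable R : realType.

(* i-th standard basis vector of R^d (i : 'I_d, 0-based) *)
Definition basis_vec (d : nat) (i : 'I_d) : 'rV[R]_d := delta_mx 0 i.

Definition grad (d : nat) (g : 'rV[R]_d -> R) (x : 'rV[R]_d) : 'rV[R]_d :=
  \row_(i < d) derive g x (basis_vec d i).

(* unprojected gradient descent with step size eta started at 0:
   gd g eta n = w_{n+1}  (so w_1 = gd g eta 0 = 0). *)
Fixpoint gd (d : nat) (g : 'rV[R]_d -> R) (eta : R) (n : nat) : 'rV[R]_d :=
  match n with
  | 0 => 0
  | n'.+1 => gd d g eta n' - eta *: grad d g (gd d g eta n')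
  end.

Definition unit_ball (d : nat) : set 'rV[R]_d :=
  [set v | \sum_(i < d) (v 0 i) ^+ 2 <= 1].

(* Iterated Lebesgue integral over R^n of h : (nat -> R) -> R, integrating
   coordinates 0, ..., n-1 (x supplies the remaining coordinates). *)
Fixpoint iter_int (n : nat) (h : (nat -> R) -> R) (x : nat -> R) : R :=
  match n with
  | 0 => h x
  | n'.+1 => Rintegral lebesgue_measure setT
               (fun y : R => iter_int n' h (fun k => if k == n' then y else x k))
  end.

Definition int_Rd (d : nat) (F : 'rV[R]_d -> R) : R :=
  iter_int d (fun x => F (\row_(i < d) x (nat_of_ord i))) (fun _ => 0).

Definition unif_ball_expect (d : nat) (F : 'rV[R]_d -> R) : R :=
  int_Rd d (fun v => (v \in unit_ball d)%:R * F v) / int_Rd d (fun v => (v \in unit_ball d)%:R).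

(* f(w) = max{0, max_{i in [d]} (1/sqrt d - w[i] - eta i/(4d))}, i = 1..d *)
Definition hard_f (d : nat) (eta : R) (w : 'rV[R]_d) : R :=
  \big[Num.max/0]_(i < d)
     (1 / Num.sqrt (d%:R) - w 0 i - eta * (i.+1)%:R / (4 * d%:R)).

Definition smoothed (d : nat) (f : 'rV[R]_d -> R) (delta : R) (w : 'rV[R]_d) : R :=
  unif_ball_expect d (fun v => f (w + delta *: v)).

End Defs.

(* Started at 0 with step eta, gradient descent on f climbs a staircase:
   step s raises coordinate s mod d by eta.  For s < T the piece of f indexed
   by s mod d stays above eta/(8d) and beats every other piece by eta/(4d), so
   on a cube of radius eta/(8d) around the iterate f equals that single affine
   piece and its gradient is minus the (s mod d)-th basis vector.  Since
   delta = eta/(16d), the ball of radius delta around any point within delta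
   of the iterate lies in that cube, so there ftilde is the average of an
   affine function: an affine function with the same slope, hence the same
   gradient.  Both runs therefore take identical steps.  Averaging only needs
   linearity of the iterated Lebesgue integral on bounded integrands supported
   in the unit cube, and a positive volume of the unit ball. *)

From HB Require Import structures.
From mathcomp Require Import all_boot all_order all_algebra.
From mathcomp Require Import all_classical all_reals all_analysis.
From mathcomp Require Import measurable_realfun ring lra.
Import Order.TTheory GRing.Theory Num.Theory.
Import numFieldNormedType.Exports.
Local Open Scope classical_set_scope.
Local Open Scope ring_scope.
Set Implicit Arguments. Unset Strict Implicit.

Lemma measurable_indic_le d (T : measurableType d) (R : realType) (f : T -> R) (c : R) :
  measurable_fun setT f -> measurable_fun setT (fun u => ((f u <= c)%R)%:R : R).
Proof.
move=> mf; have -> : (fun u => ((f u <= c)%R)%:R : R) = \1_[set u | f u <= c].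
  by apply/funext => u; rewrite indicE; case: (boolP (f u <= c)) => h;
    [rewrite mem_set | rewrite memNset //=; exact/negP].
apply: measurable_indic; rewrite -[X in measurable X]setTI.
by apply: measurable_fun_le => //; exact: measurable_cst.
Qed.

(** * Iterated integrals of bounded integrands supported in the unit cube *)

Section IteratedIntegral.
Variables (R : realType) (D : nat).
Notation mu := (@lebesgue_measure R).

Definition fill_coords (x : nat -> R) (u : D.-tuple R) : nat -> R :=
  fun k => nth (x k) u k.

Definition set_coord (x : nat -> R) (n : nat) (y : R) : nat -> R :=
  fun k => if k == n then y else x k.

Definition tuple_set (u : D.-tuple R) (n : nat) (y : R) : D.-tuple R :=
  [tuple if (i : nat) == n then y else tnth u i | i < D].

Lemma set_coord_fill_coords x u n y : (n < D)%N ->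
  set_coord (fill_coords x u) n y = fill_coords x (tuple_set u n y).
Proof.
move=> nD; apply/funext => k; rewrite /set_coord /fill_coords.
have [kD|kD] := ltnP k D.
  have -> : k = Ordinal kD by [].
  rewrite (nth_map (Ordinal kD)) ?size_enum_ord // nth_ord_enum /=.
  by case: eqP => // _; rewrite (tnth_nth (x k)).
case: eqP => [kn|_]; first by move: nD; rewrite -kn ltnNge kD.
by rewrite !nth_default // size_tuple.
Qed.

Lemma fill_coords_tuple x : fill_coords x [tuple x (nat_of_ord i) | i < D] = x.
Proof.
apply/funext => k; rewrite /fill_coords.
have [kD|kD] := ltnP k D.
  have -> : k = Ordinal kD by [].
  by rewrite (nth_map (Ordinal kD)) ?size_enum_ord // nth_ord_enum.
by rewrite nth_default // size_tuple.
Qed.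

Lemma measurable_tuple_set n :
  measurable_fun setT (fun p : D.-tuple R * R => tuple_set p.1 n p.2).
Proof.
apply/measurable_fun_tnthP => i /=; rewrite /comp /tuple_set.
under eq_fun do rewrite tnth_mktuple.
case: eqP => _; first exact: measurable_snd.
apply: (measurableT_comp (f := fun u : D.-tuple R => tnth u i)) => //.
exact: measurable_tnth.
Qed.

Lemma measurable_fill_coords x k :
  measurable_fun setT (fun u : D.-tuple R => fill_coords x u k).
Proof.
rewrite /fill_coords; have [kD|kD] := ltnP k D.
  under eq_fun do rewrite -[nth _ _ k]/(nth _ _ (Ordinal kD)) -tnth_nth.
  exact: measurable_tnth.
under eq_fun do rewrite nth_default ?size_tuple //.
exact: measurable_cst.
Qed.

Definition coords_measurable (G : (nat -> R) -> R) :=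
  forall x, measurable_fun setT (fun u : D.-tuple R => G (fill_coords x u)).

Definition vanishes_off_cube (n : nat) (G : (nat -> R) -> R) :=
  forall x k, (n <= k < D)%N -> 1 < `|x k| -> G x = 0.

(* Integrands that can still be integrated over coordinates [n, ..., D-1]. *)
Definition integrand (n : nat) (G : (nat -> R) -> R) (M : R) :=
  [/\ coords_measurable G, forall x, 0 <= G x <= M & vanishes_off_cube n G].

Definition layer (n : nat) (G : (nat -> R) -> R) (x : nat -> R) : R :=
  Rintegral mu setT (fun y => G (set_coord x n y)).

Lemma iter_intS n g x : iter_int R n.+1 g x = layer n (iter_int R n g) x.
Proof. by []. Qed.

Lemma measurable_set_coord G x n : coords_measurable G -> (n < D)%N ->
  measurable_fun setT (fun y : R => G (set_coord x n y)).
Proof.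
move=> mG nD; pose u0 := [tuple x (nat_of_ord i) | i < D].
have -> : (fun y => G (set_coord x n y)) =
    (fun u => G (fill_coords x u)) \o (fun p => tuple_set p.1 n p.2) \o pair u0.
  by apply/funext => y /=; rewrite -set_coord_fill_coords // fill_coords_tuple.
apply: (measurableT_comp (f := fun u => G (fill_coords x u))); first exact: mG.
apply: (measurableT_comp (f := fun p : D.-tuple R * R => tuple_set p.1 n p.2)).
  exact: measurable_tuple_set.
by apply: measurable_fun_pair => //; exact: measurable_cst.
Qed.

Lemma Rintegral_cst_indic_itv (a b c : R) : a <= b ->
  Rintegral mu setT (fun y => c * \1_`[a, b] y) = c * (b - a).
Proof.
move=> ab; rewrite RintegralZl //; last exact: integrable_indic_itv.
congr (_ * _); rewrite /Rintegral integral_indic // setIT.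
have := @lebesgue_measure_itv R `[a, b]; rewrite /= lte_fin => ->.
by case: ltrP => [//|ba]; rewrite /= (@le_anti _ _ a b) ?ab ?ba ?subrr.
Qed.

Lemma integrable_scale (c : R) (f : R -> R) : mu.-integrable setT (EFin \o f) ->
  mu.-integrable setT (EFin \o (fun y => c * f y)).
Proof.
move=> intf; have -> : EFin \o (fun y => c * f y) = (fun y => c%:E * (EFin \o f) y)%E.
  by apply/funext => y; rewrite /= EFinM.
exact: integrableZl.
Qed.

Lemma integrable_cst_indic_itv (a b c : R) :
  mu.-integrable setT (EFin \o (fun y => c * \1_`[a, b] y)).
Proof. by apply: integrable_scale; exact: integrable_indic_itv. Qed.

Lemma integrand_le_indic n G M x y : integrand n G M -> (n < D)%N ->
  G (set_coord x n y) <= M * \1_`[-1, 1] y.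
Proof.
case=> _ bG vG nD; rewrite indicE.
have [y1|y1] := leP `|y| 1.
  by rewrite mem_set ?mulr1 /= ?in_itv -?ler_norml //; case/andP: (bG (set_coord x n y)).
rewrite memNset ?mulr0; last by rewrite /= in_itv /= -ler_norml; apply/negP; rewrite -ltNge.
by rewrite (vG _ n) ?leqnn ?nD // /set_coord eqxx.
Qed.

Lemma integrable_layer n G M x : integrand n G M -> (n < D)%N ->
  mu.-integrable setT (EFin \o (fun y => G (set_coord x n y))).
Proof.
move=> iG nD; have [mG bG _] := iG.
apply: le_integrable (integrable_cst_indic_itv (-1) 1 M) => //.
  by apply/measurable_EFinP; exact: measurable_set_coord.
move=> y _; rewrite lee_fin.
have /andP[G0 _] := bG (set_coord x n y).
by rewrite ger0_norm // (le_trans (integrand_le_indic x y iG nD)) ?ler_norm.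
Qed.

Lemma measurable_layer n G M : integrand n G M -> (n < D)%N ->
  coords_measurable (layer n G).
Proof.
case=> mG bG _ nD x; rewrite /layer.
have -> : (fun u => Rintegral mu setT (fun y => G (set_coord (fill_coords x u) n y))) =
    fine \o fubini_F mu (fun p : D.-tuple R * R => (G (fill_coords x (tuple_set p.1 n p.2)))%:E).
  apply/funext => u /=; rewrite /fubini_F /Rintegral.
  by congr fine; apply: eq_integral => y _; rewrite set_coord_fill_coords.
apply: measurableT_comp; first exact: fine_measurable.
apply: measurable_fun_fubini_tonelli_F.
  apply/measurable_EFinP.
  apply: (measurableT_comp (f := fun u => G (fill_coords x u))); first exact: mG.
  exact: measurable_tuple_set.
by move=> p; rewrite lee_fin; case/andP: (bG (fill_coords x (tuple_set p.1 n p.2))).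
Qed.

Lemma layer_bounded n G M x : integrand n G M -> (n < D)%N ->
  0 <= layer n G x <= M * 2.
Proof.
move=> iG nD; have [_ bG _] := iG; apply/andP; split.
  by apply: Rintegral_ge0 => y _; case/andP: (bG (set_coord x n y)).
have -> : M * 2 = M * (1 - (-1)) by rewrite opprK.
rewrite -Rintegral_cst_indic_itv ?(le_trans (lerN10 _)) //.
apply: le_Rintegral => //; first exact: integrable_layer iG nD.
  exact: integrable_cst_indic_itv.
by move=> y _; exact: integrand_le_indic iG nD.
Qed.

Lemma layer_vanishes n G : vanishes_off_cube n G -> vanishes_off_cube n.+1 (layer n G).
Proof.
move=> vG x k /andP[nk kD] xk; rewrite /layer.
under eq_fun => y do rewrite (vG _ k) ?(ltnW nk) ?kD /set_coord ?(gtn_eqF nk) //.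
by rewrite Rintegral_cst // mul0r.
Qed.

Lemma integrand_layer n G M : integrand n G M -> (n < D)%N ->
  integrand n.+1 (layer n G) (M * 2).
Proof.
move=> iG nD; have [_ _ vG] := iG; split; first exact: measurable_layer iG nD.
  by move=> x; exact: layer_bounded.
exact: layer_vanishes.
Qed.

Lemma integrand_iter_int g M n : integrand 0 g M -> (n <= D)%N ->
  integrand n (iter_int R n g) (M * 2 ^+ n).
Proof.
move=> ig; elim: n => [|n IH] nD; first by rewrite expr0 mulr1.
by rewrite exprSr mulrA; apply: integrand_layer (IH (ltnW nD)) nD.
Qed.

Lemma iter_int_comb g1 g2 M1 M2 c1 c2 n x :
  integrand 0 g1 M1 -> integrand 0 g2 M2 -> (n <= D)%N ->
  iter_int R n (fun z => c1 * g1 z + c2 * g2 z) x =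
  c1 * iter_int R n g1 x + c2 * iter_int R n g2 x.
Proof.
move=> i1 i2; elim: n x => [//|n IH] x nD; rewrite !iter_intS /layer.
under eq_fun do rewrite IH ?(ltnW nD) //.
have l1 := integrable_layer x (integrand_iter_int i1 (ltnW nD)) nD.
have l2 := integrable_layer x (integrand_iter_int i2 (ltnW nD)) nD.
by rewrite RintegralD ?RintegralZl // integrable_scale.
Qed.

Lemma iter_int_le g1 g2 M1 M2 n x :
  integrand 0 g1 M1 -> integrand 0 g2 M2 -> (n <= D)%N ->
  (forall z, g1 z <= g2 z) -> iter_int R n g1 x <= iter_int R n g2 x.
Proof.
move=> i1 i2; elim: n x => [|n IH] x nD g12; first exact: g12.
apply: le_Rintegral => //.
- exact: integrable_layer (integrand_iter_int i1 (ltnW nD)) nD.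
- exact: integrable_layer (integrand_iter_int i2 (ltnW nD)) nD.
- by move=> y _; apply: IH => //; exact: ltnW.
Qed.

Definition ball_ind (x : nat -> R) : R := (\sum_(k < D) x k ^+ 2 <= 1)%R%:R.

(* On the unit ball, [a - b * x m = (a - b) + b * (1 - x m)] with a nonnegative
   second term: this is how affine integrands are fed to [iter_int_comb]. *)
Definition ball_tilt (m : nat) (x : nat -> R) : R := ball_ind x * (1 - x m).

Definition cube_ind (r : R) (x : nat -> R) : R := \prod_(k < D) (`|x k| <= r)%R%:R.

Lemma measurable_sum_sqr_coords x :
  measurable_fun setT (fun u : D.-tuple R => \sum_(k < D) fill_coords x u k ^+ 2).
Proof.
by apply: measurable_sum => k; apply: measurable_funX; exact: measurable_fill_coords.
Qed.

Lemma sqr_coord_le_sum (x : nat -> R) k : (k < D)%N -> x k ^+ 2 <= \sum_(i < D) x i ^+ 2.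
Proof.
move=> kD; rewrite (bigD1 (Ordinal kD)) //= lerDl.
by apply: sumr_ge0 => i _; exact: sqr_ge0.
Qed.

Lemma coord_le1_of_ball (x : nat -> R) k :
  (k < D)%N -> \sum_(i < D) x i ^+ 2 <= 1 -> `|x k| <= 1.
Proof.
move=> kD x1; rewrite -(@ler_pXn2r R 2) ?nnegrE // expr1n real_normK ?num_real //.
exact: le_trans (sqr_coord_le_sum x kD) x1.
Qed.

Lemma ball_ind_vanishes : vanishes_off_cube 0 ball_ind.
Proof.
move=> x k /andP[_ kD] xk; rewrite /ball_ind.
suff /negbTE -> : ~~ (\sum_(i < D) x i ^+ 2 <= 1) by [].
by apply/negP => /(coord_le1_of_ball kD); rewrite leNgt xk.
Qed.

Lemma integrand_ball_ind : integrand 0 ball_ind 1.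
Proof.
split; last exact: ball_ind_vanishes.
  by move=> x; apply: measurable_indic_le; exact: measurable_sum_sqr_coords.
by move=> x; rewrite /ball_ind; case: (_ <= 1); rewrite ?lexx ?ler01.
Qed.

Lemma integrand_ball_tilt m : (m < D)%N -> integrand 0 (ball_tilt m) 2.
Proof.
move=> mD; split.
- move=> x; apply: measurable_funM.
    by apply: measurable_indic_le; exact: measurable_sum_sqr_coords.
  by apply: measurable_funB; [exact: measurable_cst | exact: measurable_fill_coords].
- move=> x; rewrite /ball_tilt /ball_ind; case: (boolP (_ <= 1)) => [x1|_].
    by rewrite mul1r; move: (coord_le1_of_ball mD x1); rewrite ler_norml; lra.
  by rewrite mul0r lexx ler0n.
- by move=> x k kD xk; rewrite /ball_tilt (ball_ind_vanishes kD xk) mul0r.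
Qed.

Lemma integrand_cube_ind r : 0 <= r <= 1 -> integrand 0 (cube_ind r) 1.
Proof.
case/andP=> r0 r1; split.
- move=> x; apply: measurable_prod => k _; apply: measurable_indic_le.
  exact: measurableT_comp (measurable_fill_coords x k).
- move=> x; rewrite /cube_ind; apply/andP; split.
    by apply: prodr_ge0 => i _; exact: ler0n.
  apply: prodr_ile1 => i _; rewrite ler0n /=.
  by case: (_ <= r); rewrite ?lexx ?ler01.
- move=> x k /andP[_ kD] xk; rewrite /cube_ind (bigD1 (Ordinal kD)) //=.
  by rewrite leNgt (le_lt_trans r1 xk) mul0r.
Qed.

Lemma iter_int_cube_ind r n x : 0 <= r -> (n <= D)%N ->
  iter_int R n (cube_ind r) x = (2 * r) ^+ n * \prod_(n <= k < D) (`|x k| <= r)%R%:R.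
Proof.
move=> r0; elim: n x => [|n IH] x nD; first by rewrite expr0 mul1r big_mkord.
rewrite iter_intS /layer.
under eq_fun => y.
  rewrite IH ?(ltnW nD) // big_ltn // /set_coord eqxx.
  under eq_big_nat => k /andP[nk _] do rewrite (gtn_eqF nk).
  have -> : (`|y| <= r)%R%:R = \1_`[- r, r] y :> R.
    rewrite indicE; case: (boolP (`|y| <= r)) => yr.
      by rewrite mem_set //= in_itv /= -ler_norml.
    by rewrite memNset //= in_itv /= -ler_norml; exact/negP.
  rewrite mulrCA mulrC; over.
rewrite Rintegral_cst_indic_itv ?(le_trans _ r0) ?oppr_le0 //.
by rewrite opprK exprSr; ring.
Qed.

Lemma iter_int_ball_ind_gt0 x : 0 < iter_int R D ball_ind x.
Proof.
(* Compare with the cube [-r, r]^D, which lies in the ball as D r^2 <= 1. *)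
pose r : R := (D%:R + 1)^-1.
have r0 : 0 < r by rewrite invr_gt0 ltr_wpDl.
have r1 : r <= 1 by rewrite invf_le1 ?lerDr // ltr_wpDl.
have Dr1 : D%:R * r <= 1.
  by rewrite ler_pdivrMr ?ltr_wpDl // mul1r lerDl.
apply: (lt_le_trans _ (iter_int_le x (integrand_cube_ind (r := r) _) integrand_ball_ind _ _)).
- by rewrite iter_int_cube_ind ?(ltW r0) // big_geq // mulr1 exprn_gt0 ?mulr_gt0.
- by rewrite (ltW r0).
- by [].
move=> z; rewrite /cube_ind /ball_ind.
have [/forallP zr|] := boolP [forall k : 'I_D, `|z k| <= r]; last first.
  by rewrite negb_forall => /existsP[k /negbTE zk]; rewrite (bigD1 k) //= zk mul0r.
suff -> : \sum_(k < D) z k ^+ 2 <= 1.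
  by apply: prodr_ile1 => k _; rewrite zr lexx ler01.
apply: (@le_trans _ _ (D%:R * r ^+ 2)).
  have -> : D%:R * r ^+ 2 = \sum_(k < D) r ^+ 2 by rewrite sumr_const card_ord mulr_natl.
  apply: ler_sum => k _.
  by rewrite -real_normK ?num_real // lerXn2r ?nnegrE ?(ltW r0) ?zr.
by rewrite expr2 mulrA mulr_ile1 ?mulr_ge0 ?(ltW r0).
Qed.

End IteratedIntegral.

(** * Gradient descent along locally affine functions *)

Section Gradients.
Variable R : realType.

Lemma derive_local_affine (V : normedModType R) (g : V -> R) (a v : V) (b c eps : R) :
  0 < eps -> (forall h, `|h| < eps -> g (a + h *: v) = b + h * c) ->
  derive g a v = c.
Proof.
move=> eps0 gE.
have ga : g a = b by move: (gE 0); rewrite normr0 scale0r mul0r !addr0; apply.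
rewrite /derive; apply: norm_lim_near_cst; near=> h.
have h0 : h != 0 by near: h; exact: nbhs_dnbhs_neq.
have heps : `|h| < eps by near: h; exact: dnbhs0_lt.
rewrite /comp /shift /= (addrC (h *: v) a) gE // ga addrC addKr.
by change (h^-1 * (h * c) = c); rewrite mulKf.
Unshelve. all: by end_near.
Qed.

Lemma grad_local_affine d (g : 'rV[R]_d -> R) (a : 'rV[R]_d) (b eps : R) (m : 'I_d) :
  0 < eps ->
  (forall j h, `|h| < eps -> g (a + h *: basis_vec R d j) = b - h * (j == m)%:R) ->
  grad R d g a = - basis_vec R d m.
Proof.
move=> eps0 gE; apply/rowP => j; rewrite !mxE eqxx /=.
by apply: (derive_local_affine (b := b) eps0) => h /gE ->; rewrite mulrN.
Qed.

Lemma gdS d (g : 'rV[R]_d -> R) (e : R) s :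
  gd R d g e s.+1 = gd R d g e s - e *: grad R d g (gd R d g e s).
Proof. by []. Qed.

Lemma gd_eq_path d (g : 'rV[R]_d -> R) (e : R) (w v : nat -> 'rV[R]_d) n :
  w 0 = 0 -> (forall s, w s.+1 = w s + e *: v s) ->
  (forall s, (s < n)%N -> grad R d g (w s) = - v s) ->
  forall s, (s <= n)%N -> gd R d g e s = w s.
Proof.
move=> w0 wS gradE; elim=> [|s IH] sn; first by rewrite w0.
by rewrite gdS IH ?(ltnW sn) // gradE // scalerN opprK wS.
Qed.

End Gradients.

(** * The hard function along the gradient descent path *)

Section HardFunction.
Variables (R : realType) (d : nat) (e : R).
Hypotheses (d_gt0 : (0 < d)%N) (e_gt0 : 0 < e).

(* The gradient descent path: every step raises coordinate [s %% d] by [e]. *)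
Definition staircase (s : nat) : 'rV[R]_d :=
  \row_(i < d) ((s %/ d)%:R * e + (i < s %% d)%:R * e).

Definition active (s : nat) : 'I_d := Ordinal (ltn_pmod s d_gt0).

Definition hard_piece (i : 'I_d) (z : 'rV[R]_d) : R :=
  1 / Num.sqrt d%:R - z 0 i - e * i.+1%:R / (4 * d%:R).

Local Notation margin := (e / (8 * d%:R)).
Local Notation delta := (e / (16 * d%:R)).

Lemma hard_fE z : hard_f R d e z = \big[Num.max/0]_(i < d) hard_piece i z.
Proof. by []. Qed.

Lemma natr_d_gt0 : 0 < d%:R :> R. Proof. by rewrite ltr0n. Qed.

Lemma delta_gt0 : 0 < delta.
Proof. by rewrite divr_gt0 // mulr_gt0 // natr_d_gt0. Qed.

Lemma delta_add : delta + delta = margin.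
Proof. by field; rewrite lt0r_neq0 // natr_d_gt0. Qed.

Lemma staircase0 : staircase 0 = 0.
Proof. by apply/rowP => i; rewrite !mxE div0n mod0n ltn0 !mul0r addr0. Qed.

Lemma staircase_active s : staircase s 0 (active s) = (s %/ d)%:R * e.
Proof. by rewrite mxE ltnn mul0r addr0. Qed.

Lemma staircase_count_succ s (i : 'I_d) :
  (s.+1 %/ d + (i < s.+1 %% d) = s %/ d + (i < s %% d) + (i == active s))%N.
Proof.
have -> : (i == active s) = (i == s %% d :> nat)%N by [].
rewrite divnS // modnS; case: ifP => [dvd|_]; last first.
  by rewrite ltnS leq_eqVlt add0n -addnA; congr (_ + _); case: ltngtP.
have last_mod : (s %% d).+1 = d.
  apply/eqP; rewrite eqn_leq ltn_pmod //=; apply: dvdn_leq => //.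
  by move: dvd; rewrite {1}(divn_eq s d) -addnS dvdn_addr // dvdn_mull.
have i_le : (i <= s %% d)%N by rewrite -ltnS last_mod.
rewrite ltn0 addn0 addnC -addnA.
suff -> : ((i < s %% d) + (i == s %% d :> nat) = 1)%N by [].
by move: i_le; rewrite leq_eqVlt; case: ltngtP.
Qed.

Lemma staircase_succ s : staircase s.+1 = staircase s + e *: basis_vec R d (active s).
Proof.
apply/rowP => i; rewrite !mxE eqxx andTb [e * _]mulrC -!mulrDl -!natrD.
by rewrite staircase_count_succ.
Qed.

Lemma hard_piece_gap s i : i != active s ->
  hard_piece i (staircase s) <= hard_piece (active s) (staircase s) - 2 * margin.
Proof.
move=> ne; rewrite /hard_piece staircase_active mxE.
set u := margin; have u0 : 0 < u by rewrite /u divr_gt0 // mulr_gt0 // natr_d_gt0.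
have eu : e = 8 * d%:R * u by rewrite /u mulrC divfK // mulf_neq0 // lt0r_neq0 // natr_d_gt0.
have piece k : e * k%:R / (4 * d%:R) = 2 * k%:R * u.
  by rewrite eu; field; rewrite lt0r_neq0 // natr_d_gt0.
rewrite !piece -[(active s).+1]/((s %% d).+1).
have du : u <= d%:R * u by rewrite -{1}(mul1r u) ler_pM2r // ler1n.
have mdu : (s %% d).+1%:R * u <= d%:R * u by rewrite ler_pM2r // ler_nat ltn_pmod.
have iu : 0 <= i.+1%:R * u by rewrite mulr_ge0 // ltW.
have [im|mi] := ltnP i (s %% d); first by rewrite /= mul1r; lra.
have mi' : (s %% d < i)%N.
  by rewrite ltn_neqAle mi andbT; apply: contra ne => /eqP mi_eq; apply/eqP/val_inj.
have : (s %% d).+1%:R * u + u <= i.+1%:R * u.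
  by rewrite -[X in _ + X]mul1r -mulrDl ler_pM2r // natr1 ler_nat.
by rewrite /= mul0r addr0; lra.
Qed.

Lemma hard_f_local s (z : 'rV[R]_d) (rho : R) : 0 <= rho <= margin ->
  margin < hard_piece (active s) (staircase s) ->
  (forall i, `|z 0 i - staircase s 0 i| <= rho) ->
  hard_f R d e z =
  hard_piece (active s) (staircase s) - (z 0 (active s) - staircase s 0 (active s)).
Proof.
case/andP=> rho0 rho_le big_active zE.
have pieceE i : hard_piece i z = hard_piece i (staircase s) - (z 0 i - staircase s 0 i).
  by rewrite /hard_piece; ring.
have zlo i : - rho <= z 0 i - staircase s 0 i by have := zE i; rewrite ler_norml => /andP[].
have zhi i : z 0 i - staircase s 0 i <= rho by have := zE i; rewrite ler_norml => /andP[].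
rewrite hard_fE -pieceE; apply/le_anti/andP; split; last exact: le_bigmax.
apply: bigmax_le => [|i _]; first by rewrite pieceE; have := zhi (active s); lra.
have [-> //|ne] := eqVneq i (active s).
by rewrite !pieceE; have := hard_piece_gap ne; have := zlo i; have := zhi (active s); lra.
Qed.

Lemma hard_f_shift s j h : margin < hard_piece (active s) (staircase s) -> `|h| < delta ->
  hard_f R d e (staircase s + h *: basis_vec R d j) =
  hard_piece (active s) (staircase s) - h * (j == active s)%:R.
Proof.
move=> big_active hdelta; have := delta_gt0; have := delta_add => dd d0.
rewrite (hard_f_local (s := s) (rho := `|h|)) //.
- by rewrite !mxE eqxx /= eq_sym; congr (_ - _); ring.
- by rewrite normr_ge0 /=; lra.
- move=> i; rewrite !mxE eqxx /= addrAC subrr add0r normrM.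
  by case: (i == j); rewrite ?normr1 ?mulr1 ?normr0 ?mulr0.
Qed.

Lemma grad_hard_f s : margin < hard_piece (active s) (staircase s) ->
  grad R d (hard_f R d e) (staircase s) = - basis_vec R d (active s).
Proof. by move=> big_active; apply: (grad_local_affine delta_gt0) => j h; exact: hard_f_shift. Qed.

Lemma unit_ball_row (x : nat -> R) :
  ((\row_(i < d) x i) \in unit_ball R d)%:R = ball_ind d x.
Proof.
have sumE : \sum_(i < d) (\row_(i < d) x i) 0 i ^+ 2 = \sum_(k < d) x k ^+ 2.
  by apply: eq_bigr => i _; rewrite mxE.
rewrite /ball_ind; suff -> : (\row_(i < d) x i \in unit_ball R d) = (\sum_(k < d) x k ^+ 2 <= 1).
  by [].
apply/idP/idP => [/set_mem|x1].
  by rewrite /unit_ball /= sumE.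
by apply/mem_set; rewrite /unit_ball /= sumE.
Qed.

Lemma smoothed_integrand_local s j h :
  margin < hard_piece (active s) (staircase s) -> `|h| < delta ->
  (fun x : nat -> R => ((\row_(i < d) x i) \in unit_ball R d)%:R *
      hard_f R d e (staircase s + h *: basis_vec R d j + delta *: \row_(i < d) x i)) =
  (fun x => (hard_piece (active s) (staircase s) - delta - h * (j == active s)%:R)
              * ball_ind d x + delta * ball_tilt d (active s) x).
Proof.
move=> big_active hdelta; apply/funext => x; rewrite unit_ball_row /ball_tilt /ball_ind.
case: (boolP (_ <= 1)) => x1; last by rewrite /= !(mulr0, mul0r) addr0.
have := delta_gt0; have := delta_add => dd d0.
rewrite (hard_f_local (s := s) (rho := `|h| + delta)) //.
- by rewrite !mxE eqxx /= (eq_sym (active s)); ring.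
- by rewrite addr_ge0 ?normr_ge0 ?ltW //=; lra.
- move=> i; rewrite !mxE eqxx /= -addrA addrC addrK.
  apply: (le_trans (ler_normD _ _)); apply: lerD.
    by rewrite normrM; case: (i == j); rewrite ?normr1 ?mulr1 ?normr0 ?mulr0.
  rewrite normrM (gtr0_norm d0) ler_piMr ?(ltW d0) //.
  exact: coord_le1_of_ball (ltn_ord i) x1.
Qed.

(* Averaging the affine piece over the ball leaves the slope [-1] in the active
   direction; only the offset depends on the ball. *)
Lemma smoothed_shift s j h :
  margin < hard_piece (active s) (staircase s) -> `|h| < delta ->
  smoothed R d (hard_f R d e) delta (staircase s + h *: basis_vec R d j) =
  hard_piece (active s) (staircase s) - delta
    + delta * (iter_int R d (ball_tilt d (active s)) (fun=> 0)
               / iter_int R d (ball_ind d) (fun=> 0))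
    - h * (j == active s)%:R.
Proof.
move=> big_active hdelta.
rewrite /smoothed /unif_ball_expect /int_Rd (@smoothed_integrand_local s j h big_active hdelta).
have -> : (fun x : nat -> R => ((\row_(i < d) x i) \in unit_ball R d)%:R) = ball_ind d.
  by apply/funext => x; exact: unit_ball_row.
have Z0 := @iter_int_ball_ind_gt0 R d (fun=> 0).
rewrite (iter_int_comb (D := d) (M1 := 1) (M2 := 2)) //.
- by field; rewrite !lt0r_neq0 ?natr_d_gt0.
- exact: integrand_ball_ind.
- exact: integrand_ball_tilt.
Qed.

Lemma grad_smoothed s : margin < hard_piece (active s) (staircase s) ->
  grad R d (smoothed R d (hard_f R d e) delta) (staircase s) = - basis_vec R d (active s).
Proof.
by move=> big_active; apply: (grad_local_affine delta_gt0) => j h; exact: smoothed_shift.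
Qed.

(* Along the first [T] steps the active piece stays above [margin]: the path
   moves by at most [T e / d <= 1 / (5 sqrt d)] in the active coordinate. *)
Lemma staircase_margin (T s : nat) :
  e * Num.sqrt d%:R <= 1 / 5 -> 5 * T%:R * e <= Num.sqrt d%:R -> (s < T)%N ->
  margin < hard_piece (active s) (staircase s).
Proof.
move=> er Ter sT; rewrite /hard_piece staircase_active.
have d0 := natr_d_gt0.
set r := Num.sqrt d%:R in er Ter *.
have r0 : 0 < r by rewrite sqrtr_gt0.
have rr : r * r = d%:R by rewrite -expr2 sqr_sqrtr // ler0n.
set A := 1 / r.
have A0 : 0 < A by rewrite divr_gt0.
have Ar : A * r = 1 by rewrite /A mul1r mulVf // lt0r_neq0.
have eA : e <= A / 5 by rewrite -(ler_pM2r r0) mulrAC Ar; lra.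
have KeA : (s %/ d)%:R * e <= A / 5.
  rewrite -(ler_pM2r r0) [A / 5 * r]mulrAC Ar -(ler_pM2r r0) -mulrA rr.
  apply: (@le_trans _ _ (T%:R * e)); last lra.
  rewrite mulrAC ler_pM2r // -natrM ler_nat.
  by rewrite (leq_trans (leq_divM s d)) // ltnW.
have md : e * (s %% d).+1%:R / (4 * d%:R) <= e / 4.
  rewrite ler_pdivrMr ?mulr_gt0 // (_ : e / 4 * (4 * d%:R) = e * d%:R); last by field.
  by rewrite ler_pM2l // ler_nat ltn_pmod.
have m8 : e / (8 * d%:R) <= e / 8.
  rewrite ler_pdivrMr ?mulr_gt0 // (_ : e / 8 * (8 * d%:R) = e * d%:R); last by field.
  by apply: ler_peMr; rewrite ?ler1n // ltW.
lra.
Qed.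
End HardFunction.

Lemma step_size_bounds (R : realType) (T d : nat) (e : R) :
  (1 <= T)%N -> 0 < e -> e <= 1 / (5 * Num.sqrt T%:R) ->
  d%:R = Num.max (25 * e ^+ 2 * T%:R ^+ 2) 1 ->
  e * Num.sqrt d%:R <= 1 / 5 /\ 5 * T%:R * e <= Num.sqrt d%:R.
Proof.
move=> T1 e0 eT dE.
have T1R : 1 <= T%:R :> R by rewrite ler1n.
have sqrtT0 : 0 < Num.sqrt T%:R :> R by rewrite sqrtr_gt0 (lt_le_trans ltr01).
have eT2 : 25 * e ^+ 2 * T%:R <= 1.
  have eT1 : e * (5 * Num.sqrt T%:R) <= 1 by rewrite -ler_pdivlMr ?mulr_gt0.
  have : (e * (5 * Num.sqrt T%:R)) ^+ 2 <= 1.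
    by rewrite expr_le1 // mulr_ge0 ?mulr_ge0 ?(ltW e0) ?(ltW sqrtT0).
  by rewrite !exprMn sqr_sqrtr ?ler0n //; lra.
have e2d : e ^+ 2 * d%:R <= 1 / 25.
  rewrite dE maxEle; case: ifP => _.
    have : e ^+ 2 <= e ^+ 2 * T%:R by rewrite ler_peMr ?sqr_ge0.
    lra.
  have : (25 * e ^+ 2 * T%:R) ^+ 2 <= 1.
    by rewrite expr_le1 // (mulr_ge0 (mulr_ge0 _ (sqr_ge0 e))) ?ler0n.
  by lra.
have d0 : 0 <= d%:R :> R by [].
split; rewrite -(@ler_pXn2r _ 2) ?nnegrE ?mulr_ge0 ?sqrtr_ge0 ?(ltW e0) //.
  by rewrite exprMn sqr_sqrtr //; lra.
by rewrite sqr_sqrtr // dE le_max; apply/orP; left; rewrite !exprMn; lra.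
Qed.

Theorem mainTheorem14 (R : realType) (T : nat) (eta : R) (d : nat) :
  (1 <= T)%N ->
  0 < eta -> eta <= 1 / (5 * Num.sqrt (T%:R)) ->
  (0 < d)%N -> d%:R = Num.max (25 * eta ^+ 2 * (T%:R) ^+ 2) 1 ->
  let f := hard_f R d eta in
  let delta := eta / (16 * d%:R) in
  let ftilde := smoothed R d f delta in
  forall t : nat, (1 <= t <= T)%N ->
    gd R d f eta t.-1 = gd R d ftilde eta t.-1.
Proof.
move=> T1 eta0 etaT d0 dE f delta ftilde t /andP[_ tT].
have [eta_sqrt_d T_sqrt_d] := step_size_bounds T1 eta0 etaT dE.
have margin s : (s < T)%N ->
    eta / (8 * d%:R) < hard_piece eta (active d0 s) (staircase d eta s).
  exact: (staircase_margin d0 eta0 eta_sqrt_d T_sqrt_d).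
have path := gd_eq_path (staircase0 d eta) (staircase_succ eta d0) (n := T).
rewrite path ?path ?(leq_trans (leq_pred t)) // => s sT.
- exact: (grad_smoothed eta0 (margin s sT)).
- exact: (grad_hard_f eta0 (margin s sT)).
Qed.
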